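(* Let $p_0<1$. For each $n$ let $(C_{n,i})_{i\ge1}$ be independent events with $P(C_{n,i})\le p_0$ for all $i$. Suppose there is a random variable $M^*$ with values in $\{0,1,2,\dots;\infty\}$ such that $\sum_i\mathbf 1_{C_{n,i}}\to M^*$ in distribution on $\{0,1,2,\dots;\infty\}$ (with its one-point compactification topology) as $n\to\infty$. Then either $P(M^*=0)>0$ or $P(M^*=\infty)=1$. *)

From HB Require Import structures.
From mathcomp Require Import all_boot all_order all_algebra.
From mathcomp Require Import all_classical all_reals all_analysis measurable_realfun.
Set Implicit Arguments. Unset Strict Implicit. Unset Printing Implicit Defensive.
Import Order.TTheory GRing.Theory Num.Theory.
Import numFieldNormedType.Exports.
Local Open Scope classical_set_scope.
Local Open Scope ring_scope.

(* The space {0,1,2,...;oo}, viewed as a subspace of the extended reals.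
   The subspace topology induced by \bar R is exactly the one-point
   compactification topology of the discrete space N. *)
Definition extnat (R : realType) : set (\bar R) :=
  [set x | x = +oo%E \/ exists k : nat, x = (k%:R)%:E].

Definition count_events (T : Type) (R : realType) (C : nat -> set T) (x : T)
  : \bar R := (\sum_(0 <= i <oo) ((\1_(C i) x : R)%:E))%E.

Definition mutually_independent (d : measure_display) (T : measurableType d)
  (R : realType) (P : probability T R) (C : nat -> set T) : Prop :=
  forall s : seq nat, uniq s ->
    P (\big[setI/setT]_(i <- s) C i) = (\prod_(i <- s) P (C i))%E.

Definition cvg_dist_extnat (R : realType)
  (d : nat -> measure_display) (T : forall n, measurableType (d n))
  (P : forall n, probability (T n) R) (X : forall n, T n -> \bar R)
  (d0 : measure_display) (T0 : measurableType d0) (P0 : probability T0 R)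
  (Y : T0 -> \bar R) : Prop :=
  forall f : \bar R -> R,
    {within @extnat R, continuous f} ->
    (exists B : R, forall x : \bar R, @extnat R x -> `|f x| <= B) ->
    (fun n => (\int[P n]_x (f (X n x))%:E)%E) @ \oo
      --> (\int[P0]_x (f (Y x))%:E)%E.

From HB Require Import structures.
From mathcomp Require Import all_boot all_order all_algebra.
From mathcomp Require Import all_classical all_reals all_analysis measurable_realfun.
From mathcomp Require Import ring lra.
Set Implicit Arguments.
Unset Strict Implicit.
Unset Printing Implicit Defensive.
Import Order.TTheory GRing.Theory Num.Theory.
Import numFieldNormedType.Exports.
Local Open Scope classical_set_scope.
Local Open Scope ring_scope.

(* Write z(m, L) for the probability that none of the events C_m, ..., C_(L-1)
   occurs; by independence it is a product of factors 1 - P(C_i) >= 1 - p0.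
   Fix eta in (0, 1) and a = eta (1 - p0).  If z(m, L) <= a^(k+1), then at most
   k of these events occur with probability at most (k+1) eta: cut [m, L) at the
   first N with z(m, N) <= eta, so that z(m, N) > a and hence z(N, L) <= a^k,
   and use induction on k.  Since P(sum_i 1_(C_i) < 1/2) >= lim_L z(0, L),
   the count S_n = sum_i 1_(C_n,i) satisfies P(S_n <= k) <= (k+1) eta as soon
   as P(S_n = 0) < a^(k+1).  The indicator of {x < k + 1/2} is continuous on
   {0, 1, ..., oo}, so if P(M = 0) = 0 these bounds pass to the limit and give
   P(M <= k) = 0 for every k, i.e. M = oo almost surely. *)

Lemma indic_lt_continuous (R : realType) (c x : \bar R) : x != c ->
  {for x, continuous (\1_[set y | (y < c)%E] : \bar R -> R)}.
Proof.
move=> xc; apply: cvg_near_cst.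
have [xlt|xge] := boolP (x < c)%E.
  have : nbhs x [set y | (y < c)%E].
    by apply: open_nbhs_nbhs; split => //; exact: open_ereal_lt_ereal.
  by apply: filterS => y yc; rewrite !indicE !mem_set.
have cx : (c < x)%E by rewrite lt_neqAle eq_sym xc leNgt.
have : nbhs x [set y | (c < y)%E].
  by apply: open_nbhs_nbhs; split => //; exact: open_ereal_gt_ereal.
apply: filterS => y /= cy; rewrite !indicE !memNset //= => yc.
  by move: xge; rewrite yc.
by move: (lt_trans cy yc); rewrite ltxx.
Qed.

Lemma cvge_near_lt (R : realType) (T : Type) (F : set_system T) {FF : Filter F}
  (u : T -> \bar R) (l b : \bar R) :
  u @ F --> l -> (l < b)%E -> \forall n \near F, (u n < b)%E.
Proof.
move=> ul lb; apply: (ul [set y | (y < b)%E]); apply: open_nbhs_nbhs; split => //.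
exact: open_ereal_lt_ereal.
Qed.

Lemma natr_neq_half (R : realType) (k j : nat) : (j%:R : R) != k%:R + 2^-1.
Proof.
have h2 : (0 : R) < 2^-1 by rewrite invr_gt0 ltr0n.
have h3 : (2^-1 : R) < 1 by rewrite invf_lt1 // ltr1n.
apply/negP => /eqP jk; case: (leqP j k) => [|kj].
  by rewrite -(ler_nat R); lra.
by move: kj; rewrite -(ler_nat R) -natr1; lra.
Qed.

Lemma measurable_lt_cst d (T : measurableType d) (R : realType)
  (f : T -> \bar R) (c : \bar R) :
  measurable_fun setT f -> measurable [set x | (f x < c)%E].
Proof. by move=> mf; rewrite -[X in measurable X]setTI; exact: measurable_lte. Qed.

Lemma measurable_ltr_cst d (T : measurableType d) (R : realType) (f : T -> R) (c : R) :
  measurable_fun setT f -> measurable [set x | f x < c].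
Proof.
move=> mf; have := mf measurableT _ (measurable_itv `]-oo, c[).
by rewrite setTI; congr measurable; apply/seteqP; split => x /=; rewrite in_itv.
Qed.

Lemma integral_indic_lt d (T : measurableType d) (R : realType)
  (Q : probability T R) (X : T -> \bar R) (c : \bar R) : measurable_fun setT X ->
  (\int[Q]_x (\1_[set y | (y < c)%E] (X x) : R)%:E = Q [set x | (X x < c)%E])%E.
Proof.
move=> mX.
rewrite (_ : (fun x => _) = (fun x => (\1_(X @^-1` [set y | (y < c)%E]) x)%:E)) //.
by rewrite integral_indic ?setIT //; exact: measurable_lt_cst.
Qed.

Lemma cvg_dist_extnat_lt (R : realType)
  (d : nat -> measure_display) (T : forall n, measurableType (d n))
  (P : forall n, probability (T n) R) (X : forall n, T n -> \bar R)
  (d0 : measure_display) (T0 : measurableType d0) (P0 : probability T0 R)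
  (Y : T0 -> \bar R) (c : R) :
  cvg_dist_extnat P X P0 Y ->
  (forall n, measurable_fun setT (X n)) -> measurable_fun setT Y ->
  (forall j : nat, (j%:R : R) != c) ->
  (fun n => P n [set x | (X n x < c%:E)%E]) @ \oo --> P0 [set y | (Y y < c%:E)%E].
Proof.
move=> XY mX mY hc.
have cont : {within @extnat R, continuous (\1_[set y | (y < c%:E)%E] : \bar R -> R)}.
  apply: continuous_in_subspaceT => x; rewrite in_setE => -[->|[j ->]].
    exact: indic_lt_continuous.
  by apply: indic_lt_continuous; rewrite eqe.
have bnd : exists B : R,
    forall x, @extnat R x -> `|\1_[set y | (y < c%:E)%E] x : R| <= B.
  by exists 1 => x _; rewrite indicE; case: (_ \in _); rewrite ?normr0 ?normr1.
rewrite -integral_indic_lt //.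
under eq_fun do rewrite -integral_indic_lt //.
exact: XY.
Qed.

Lemma first_crossing (R : realDomainType) (f : nat -> R) (eta : R) (m L : nat) :
  (m <= L)%N -> eta < f m -> f L <= eta ->
  exists N, [/\ (m < N <= L)%N, f N <= eta & eta < f N.-1].
Proof.
move=> + fm; elim: L => [|L IH]; first by rewrite leqn0 => /eqP<-; lra.
rewrite leq_eqVlt => /orP[/eqP<-|]; first by lra.
rewrite ltnS => mL fL; have [fL'|fL'] := leP (f L) eta.
  by have [N [/andP[mN NL] ? ?]] := IH mL fL'; exists N; rewrite mN (leqW NL).
by exists L.+1; rewrite ltnS mL leqnn.
Qed.

Section counting_events.
Context (R : realType) (d : measure_display) (T : measurableType d) (C : nat -> set T).

Definition count_in m n x : R := \sum_(m <= i < n) \1_(C i) x.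

Definition no_event m n : set T := \big[setI/setT]_(m <= i < n) ~` C i.

Lemma count_in_split m k n x : (m <= k <= n)%N ->
  count_in m n x = count_in m k x + count_in k n x.
Proof. by move=> /andP[mk kn]; rewrite /count_in (big_cat_nat mk kn). Qed.

Lemma count_in_ge1 m n x : ~ no_event m n x -> 1 <= count_in m n x.
Proof.
move=> nz; have [i im Ci] : exists2 i, i \in index_iota m n & C i x.
  apply: contra_notP nz => noC; rewrite /no_event -bigcap_seq => i im Ci.
  by apply: noC; exists i.
rewrite /count_in (bigD1_seq i) ?iota_uniq //= indicE mem_set // lerDl.
by apply: sumr_ge0 => j _; rewrite indicE ler0n.
Qed.

Lemma count_in_lt1 m n : [set x | count_in m n x < 1] `<=` no_event m n.
Proof.
move=> x /= lt1; apply: contrapT => nz.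
by have /count_in_ge1 := nz; lra.
Qed.

Lemma count_in_lt_succ k m N L : (m <= N <= L)%N ->
  [set x | count_in m L x < k.+2%:R] `<=`
    no_event m N `|` [set x | count_in N L x < k.+1%:R].
Proof.
move=> mNL x /=; rewrite (count_in_split x mNL) -natr1 => lt.
have [|nz] := pselect (no_event m N x); [by left | right].
by have /count_in_ge1 := nz; lra.
Qed.

Lemma count_in_le_count_events n x : ((count_in 0 n x)%:E <= count_events R C x)%E.
Proof.
rewrite /count_in -sumEFin; apply: nneseries_lim_ge => i _ _.
by rewrite lee_fin indicE ler0n.
Qed.

Lemma count_events_eq0 x : (forall i, ~ C i x) -> count_events R C x = 0%E.
Proof. by move=> h; apply: eseries0 => i _ _; rewrite indicE memNset. Qed.

Hypothesis mC : forall i, measurable (C i).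

Lemma measurable_count_in m n : measurable_fun setT (count_in m n).
Proof. by apply: measurable_sum => i; exact: measurable_indic. Qed.

Lemma measurable_no_event m n : measurable (no_event m n).
Proof. by apply: bigsetI_measurable => i _; exact: measurableC. Qed.

Lemma measurable_count_events : measurable_fun setT (count_events R C).
Proof.
apply: (ge0_emeasurable_sum (P := xpredT)) => [k x _ _|k _].
  by rewrite lee_fin indicE ler0n.
by apply/measurable_EFinP; exact: measurable_indic.
Qed.

End counting_events.

Section independent_events.
Context (R : realType) (d : measure_display) (T : measurableType d)
  (P : probability T R) (C : nat -> set T) (mC : forall i, measurable (C i))
  (indep : mutually_independent P C).

Local Notation q i := (fine (P (C i))).

Definition no_event_prob m n := \prod_(m <= i < n) (1 - q i).

Lemma fine_probabilityK (A : set T) : measurable A -> (fine (P A))%:E = P A.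
Proof. by move=> mA; rewrite fineK // fin_num_measure. Qed.

Lemma indep_bigsetI_setC (s t : seq nat) : uniq (t ++ s) ->
  P (\big[setI/setT]_(i <- t) C i `&` \big[setI/setT]_(i <- s) ~` C i)
  = (fine (P (\big[setI/setT]_(i <- t) C i)) * \prod_(i <- s) (1 - q i))%:E.
Proof.
have mI u : measurable (\big[setI/setT]_(i <- u) C i) by exact: bigsetI_measurable.
elim: s t => [|a s IH] t ut; first by rewrite !big_nil setIT mulr1 fine_probabilityK.
set A := \big[setI/setT]_(i <- t) C i; set B := \big[setI/setT]_(i <- s) ~` C i.
have mB : measurable B by apply: bigsetI_measurable => i _; exact: measurableC.
have uat : uniq ((a :: t) ++ s) by move: ut; rewrite -cat1s uniq_catCA.
have uts : uniq (t ++ s) by case/andP: uat.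
have -> : A `&` \big[setI/setT]_(i <- a :: s) ~` C i = (A `&` B) `\` C a.
  by rewrite big_cons; apply/seteqP; split => x /=; tauto.
have mAB : measurable (A `&` B) by apply: measurableI => //; exact: mI.
rewrite measureD //; last exact: le_lt_trans (probability_le1 _ mAB) (ltry _).
have -> : A `&` B `&` C a = \big[setI/setT]_(i <- a :: t) C i `&` B.
  by rewrite big_cons; apply/seteqP; split => x /=; tauto.
have Pat : P (\big[setI/setT]_(i <- a :: t) C i) = (P (C a) * P A)%E.
  rewrite indep; last by move: uat; rewrite cat_uniq => /andP[].
  by rewrite big_cons indep //; move: uts; rewrite cat_uniq => /andP[].
transitivity (P (A `&` B) - P (\big[setI/setT]_(i <- a :: t) C i `&` B))%E => //.
rewrite (IH t uts) (IH _ uat) Pat.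
rewrite -(fine_probabilityK (mC a)) -(fine_probabilityK (mI t)).
by rewrite -EFinM /= big_cons -EFinB; congr EFin; ring.
Qed.

Lemma probability_no_event m n : P (no_event C m n) = (no_event_prob m n)%:E.
Proof.
have := @indep_bigsetI_setC (index_iota m n) [::].
rewrite big_nil setTI probability_setT mul1r; apply; exact: iota_uniq.
Qed.

Lemma no_event_prob_ge0 m n : 0 <= no_event_prob m n.
Proof.
apply: prodr_ge0 => i _; rewrite subr_ge0 -lee_fin fine_probabilityK //.
exact: probability_le1.
Qed.

Lemma no_event_probnn m : no_event_prob m m = 1.
Proof. by rewrite /no_event_prob big_geq. Qed.

Lemma no_event_prob_split m k n : (m <= k <= n)%N ->
  no_event_prob m n = no_event_prob m k * no_event_prob k n.
Proof. by move=> /andP[mk kn]; rewrite /no_event_prob (big_cat_nat mk kn). Qed.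

Lemma exists_no_event_prob_lt (delta : R) :
  (P [set x | (count_events R C x < (2^-1)%:E)%E] < delta%:E)%E ->
  exists L, no_event_prob 0 L < delta.
Proof.
move=> hd; have mN := measurable_no_event mC 0.
have noninc : nonincreasing_seq (no_event C 0).
  move=> n n' nn'; rewrite subsetEset /no_event -!bigcap_seq => x h i /=.
  rewrite !mem_index_iota => /andP[_ i_n']; apply: h.
  by rewrite /= mem_index_iota (leq_trans i_n').
have mcap : measurable (\bigcap_n no_event C 0 n) by exact: bigcapT_measurable.
have cap_sub : (P (\bigcap_n no_event C 0 n)
    <= P [set x | (count_events R C x < (2^-1)%:E)%E])%E.
  apply: le_measure; rewrite ?inE //.
    exact/measurable_lt_cst/measurable_count_events.
  move=> x nx /=; rewrite count_events_eq0 ?lte_fin ?invr_gt0 // => i Ci.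
  have := nx i.+1 I; rewrite /no_event -bigcap_seq => /(_ i).
  by rewrite /= mem_index_iota ltnS leqnn; apply.
have fin0 : (P (no_event C 0 0) < +oo)%E.
  exact: le_lt_trans (probability_le1 P (mN 0%N)) (ltry 1).
have [L _ hL] := cvge_near_lt (nonincreasing_cvg_mu fin0 mN mcap noninc)
  (le_lt_trans cap_sub hd).
by exists L; have := hL L (leqnn L); rewrite /= probability_no_event lte_fin.
Qed.

Variables (p0 : R) (hCp : forall i, (P (C i) <= p0%:E)%E).

Let p0_ge0 : 0 <= p0.
Proof. by rewrite -lee_fin (le_trans _ (hCp 0)). Qed.

Lemma no_event_prob_succ m n : (m <= n)%N ->
  no_event_prob m n * (1 - p0) <= no_event_prob m n.+1.
Proof.
move=> mn; rewrite /no_event_prob big_nat_recr //= ler_wpM2l ?no_event_prob_ge0 //.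
by rewrite lerD2l lerN2 -lee_fin fine_probabilityK.
Qed.

Hypothesis hp0 : p0 < 1.

Lemma no_event_prob_cut (eta : R) k m L : 0 < eta < 1 ->
  no_event_prob m L <= (eta * (1 - p0)) ^+ k.+2 ->
  exists2 N, (m <= N <= L)%N &
    no_event_prob m N <= eta /\ no_event_prob N L <= (eta * (1 - p0)) ^+ k.+1.
Proof.
move=> /andP[eta0 eta1]; set a := eta * (1 - p0) => zL.
have a0 : 0 < a by rewrite mulr_gt0 // subr_gt0.
have aeta : a <= eta by rewrite /a; have := p0_ge0; nra.
have zL_eta : no_event_prob m L <= eta.
  apply: (le_trans zL); rewrite exprS; apply: (le_trans _ aeta).
  by rewrite ger_pMr // exprn_ile1 ?ltW //; exact: le_lt_trans aeta eta1.
have mL : (m <= L)%N.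
  rewrite leqNgt; apply/negP => /ltnW Lm.
  by move: zL_eta; rewrite /no_event_prob big_geq //; lra.
have zmm : eta < no_event_prob m m by rewrite no_event_probnn.
have [N [/andP[mN NL] zN zN1]] := first_crossing mL zmm zL_eta.
have zNa : a < no_event_prob m N.
  have N0 : (0 < N)%N := leq_ltn_trans (leq0n m) mN.
  have mN1 : (m <= N.-1)%N by rewrite -ltnS prednK.
  have gap : 0 < (no_event_prob m N.-1 - eta) * (1 - p0).
    by rewrite mulr_gt0 ?subr_gt0.
  by have := no_event_prob_succ mN1; rewrite prednK // /a; nra.
exists N; first by rewrite (ltnW mN) NL.
split=> //; move: zL; rewrite (no_event_prob_split (k := N)) ?(ltnW mN) // exprS.
by have := no_event_prob_ge0 N L; have := exprn_ge0 k.+1 (ltW a0); nra.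
Qed.

Lemma measurable_count_in_lt m L c : measurable [set x | count_in R C m L x < c].
Proof. exact/measurable_ltr_cst/measurable_count_in. Qed.

Lemma count_in_lt_prob_le (eta : R) k m L : 0 < eta < 1 ->
  no_event_prob m L <= (eta * (1 - p0)) ^+ k.+1 ->
  (P [set x | (count_in R C m L x < k.+1%:R)%R] <= (k.+1%:R * eta)%:E)%E.
Proof.
move=> heta; elim: k m L => [|k IH] m L zL.
  apply: (le_trans (y := P (no_event C m L))).
    by apply: le_measure; rewrite ?inE; [exact: measurable_count_in_lt |
      exact: measurable_no_event | exact: count_in_lt1].
  rewrite probability_no_event lee_fin mul1r (le_trans zL) // expr1.
  by case/andP: heta => eta0 _; rewrite ger_pMr // lerBlDr lerDl.
have [N mNL [zN zNL]] := no_event_prob_cut heta zL.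
set E := [set x | (count_in R C N L x < k.+1%:R)%R].
apply: (le_trans (y := P (no_event C m N `|` E))).
  by apply: le_measure; rewrite ?inE; [exact: measurable_count_in_lt |
    apply: measurableU; [exact: measurable_no_event | exact: measurable_count_in_lt] |
    exact: count_in_lt_succ].
apply: (le_trans (y := P (no_event C m N) + P E)).
  exact: measureU2 (measurable_no_event _ _ _) (measurable_count_in_lt _ _ _).
have zN' : ((no_event_prob m N)%:E <= eta%:E)%E by rewrite lee_fin.
rewrite probability_no_event (le_trans (leeD zN' (IH _ _ zNL))) //.
by rewrite -EFinD lee_fin -[k.+2]addn1 natrD mulrDl mul1r addrC.
Qed.

Lemma count_events_lt_prob_le (eta : R) k : 0 < eta < 1 ->
  (P [set x | (count_events R C x < (2^-1)%:E)%E]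
    < ((eta * (1 - p0)) ^+ k.+1)%:E)%E ->
  (P [set x | (count_events R C x < (k%:R + 2^-1)%:E)%E]
    <= (k.+1%:R * eta)%:E)%E.
Proof.
move=> heta /exists_no_event_prob_lt[L zL].
apply: le_trans (count_in_lt_prob_le heta (ltW zL)).
apply: le_measure; rewrite ?inE; [exact/measurable_lt_cst/measurable_count_events |
  exact: measurable_count_in_lt |].
move=> x /= lt; have := le_lt_trans (count_in_le_count_events R C L x) lt.
have : (2^-1 : R) < 1 by rewrite invf_lt1 // ltr1n.
by rewrite lte_fin -natr1; lra.
Qed.

End independent_events.

Lemma probability_eq0_le_scale d (T : measurableType d) (R : realType)
  (Q : probability T R) (A : set T) (c : R) :
  0 < c -> measurable A -> (forall eta, 0 < eta < 1 -> (Q A <= (c * eta)%:E)%E) ->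
  Q A = 0%E.
Proof.
move=> c0 mA bound; rewrite -(fine_probabilityK Q mA); congr EFin.
have y0 : 0 <= fine (Q A) by rewrite -lee_fin fine_probabilityK.
have y1 : fine (Q A) <= 1 by rewrite -lee_fin fine_probabilityK // probability_le1.
apply/eqP; rewrite eq_le y0 andbT leNgt; apply/negP => ypos.
have c2 : 0 < 2 * c + 2 by lra.
have eta01 : 0 < fine (Q A) / (2 * c + 2) < 1.
  by rewrite divr_gt0 //= ltr_pdivrMr // mul1r; lra.
have := bound _ eta01; rewrite -(fine_probabilityK Q mA) lee_fin mulrA ler_pdivlMr //.
by nra.
Qed.

Lemma extnat_lt_half_eq0 (T : Type) (R : realType) (X : T -> \bar R) :
  (forall t, extnat (X t)) -> [set t | (X t < (2^-1)%:E)%E] = [set t | X t = 0%E].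
Proof.
move=> hX; apply/seteqP; split => t /=; last by move=> ->; rewrite lte_fin invr_gt0.
case: (hX t) => [->|[[|j] ->]] //.
have : (2^-1 : R) < 1 by rewrite invf_lt1 // ltr1n.
have : (1 : R) <= j.+1%:R by rewrite ler1n.
by rewrite lte_fin => ? ? ?; exfalso; lra.
Qed.

Lemma extnat_eq_pinfty (T : Type) (R : realType) (X : T -> \bar R) :
  (forall t, extnat (X t)) ->
  [set t | X t = +oo%E] = ~` \bigcup_k [set t | (X t < (k%:R + 2^-1)%:E)%E].
Proof.
move=> hX; apply/seteqP; split => t /=.
  by move=> Xt [k _ /=]; rewrite Xt ltNge leey.
move=> nU; case: (hX t) => [//|[j Xj]]; exfalso; apply: nU; exists j => //=.
by rewrite Xj lte_fin ltrDl invr_gt0.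
Qed.

Theorem lemma50 (R : realType) (p0 : R) (hp0 : p0 < 1)
  (d : nat -> measure_display) (T : forall n, measurableType (d n))
  (P : forall n, probability (T n) R)
  (C : forall n, nat -> set (T n))
  (hCmeas : forall n i, measurable (C n i))
  (hCindep : forall n, mutually_independent (P n) (C n))
  (hCp : forall n i, (P n (C n i) <= p0%:E)%E)
  (d0 : measure_display) (T0 : measurableType d0) (P0 : probability T0 R)
  (M : T0 -> \bar R)
  (hMmeas : measurable_fun setT M)
  (hMval : forall x, @extnat R (M x))
  (hcvg : cvg_dist_extnat P (fun n => @count_events (T n) R (C n)) P0 M) :
  (0 < P0 [set x | M x = 0%E])%E \/ P0 [set x | M x = +oo%E] = 1%E.
Proof.
have mS n := measurable_count_events (R := R) (hCmeas n).
have lim_lt c := cvg_dist_extnat_lt (c := c) hcvg mS hMmeas.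
have mMlt (c : \bar R) : measurable [set x | (M x < c)%E] by exact: measurable_lt_cst.
have [M0|M0] := boolP (0 < P0 [set x | M x = 0%E])%E; [by left | right].
have lim_half := lim_lt _ (natr_neq_half R 0); rewrite mulr0n add0r in lim_half.
have Mhalf : P0 [set x | (M x < (2^-1)%:E)%E] = 0%E.
  by rewrite extnat_lt_half_eq0 //; apply/eqP; rewrite eq_le measure_ge0 andbT leNgt.
have Mk k : P0 [set x | (M x < (k%:R + 2^-1)%:E)%E] = 0%E.
  apply: (probability_eq0_le_scale (c := k.+1%:R)) => // eta heta.
  have Mhalf_lt : (P0 [set x | (M x < (2^-1)%:E)%E]
      < ((eta * (1 - p0)) ^+ k.+1)%:E)%E.
    case/andP: heta => eta0 _.
    by rewrite Mhalf lte_fin exprn_gt0 // mulr_gt0 // subr_gt0.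
  apply: (cvge_le _ (lim_lt _ (natr_neq_half R k))).
  apply: filterS (cvge_near_lt lim_half Mhalf_lt) => n.
  exact: (count_events_lt_prob_le (hCmeas n) (hCindep n) (hCp n) hp0 heta).
have mU : measurable (\bigcup_k [set x | (M x < (k%:R + 2^-1)%:E)%E]).
  exact: bigcupT_measurable.
rewrite extnat_eq_pinfty // probability_setC // [X in (1 - X)%E](_ : _ = 0%E) ?sube0 //.
apply/negligibleP; first exact: mU.
by apply: negligible_bigcup => k; apply/negligibleP; [exact: mMlt | exact: Mk].
Qed.
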